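(* Let $\mathcal{A}=(Q,\Sigma,q_0,\Delta,F,C)$ be an SPBA such that accepting states appear only in the leaves of the condensation of $\mathcal{A}$, and there is at most one accepting state per leaf. Then $S_\omega(\mathcal{A})=\bigcup_{f\in F}S_\omega(Q,\Sigma,q_0,\Delta,\{f\},C)$.
   Context: A semi-linear set in $\mathbb{N}^d$ is a finite union of sets $\{b_0+\sum_{j=1}^\ell b_jz_j\mid z_j\in\mathbb{N}\}$ with $b_j\in\mathbb{N}^d$. A (strong reset) Parikh–Büchi automaton (SPBA) of dimension $d$ is $\mathcal{A}=(Q,\Sigma,q_0,\Delta,F,C)$ with finite $Q$, $q_0\in Q$, $F\subseteq Q$, finite $\Delta\subseteq Q\times\Sigma\times\mathbb{N}^d\times Q$, and semi-linear $C\subseteq\mathbb{N}^d$. A run on an infinite word $\alpha$ is $r=r_1r_2\cdots$ with $r_i=(p_{i-1},\alpha_i,\mathbf{v}_i,p_i)\in\Delta$, $p_0=q_0$; with $\rho(r_a\cdots r_b)=\sum_{i=a}^b\mathbf{v}_i$. Setting $k_0=0$ and letting $k_1<k_2<\cdots$ be all positions with $p_{k_i}\in F$, the run is accepting if this sequence is infinite and $\rho(r_{k_{i-1}+1}\cdots r_{k_i})\in C$ for all $i\ge1$. $S_\omega(\mathcal{A})$ is the set of infinite words with an accepting run. The underlying graph of $\mathcal{A}$ has vertex set $Q$ and an edge $(p,q)$ iff some transition goes from $p$ to $q$. A strongly connected component (SCC) is a maximal set of mutually reachable vertices. The condensation is the DAG of SCCs with an edge $(U,V)$ iff some $u\in U$,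 $v\in V$ have an edge $(u,v)$; its leaves are SCCs without outgoing edges. *)

From mathcomp Require Import all_boot.
Set Implicit Arguments. Unset Strict Implicit. Unset Printing Implicit Defensive.

Definition vec (d : nat) := {ffun 'I_d -> nat}.

Definition linear_set d (b0 : vec d) (bs : seq (vec d)) (v : vec d) : Prop :=
  exists zs : seq nat, size zs = size bs /\
    forall k : 'I_d,
      v k = b0 k + \sum_(j < size bs) nth 0 zs j * (nth b0 bs j) k.

Definition semilinear d (C : vec d -> Prop) : Prop :=
  exists L : seq (vec d * seq (vec d)),
    forall v, C v <-> exists p, p \in L /\ linear_set p.1 p.2 v.

Definition trans (Q Sigma : Type) d := (Q * Sigma * vec d * Q)%type.
Definition tsrc Q Sigma d (t : trans Q Sigma d) : Q := t.1.1.1.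
Definition tlab Q Sigma d (t : trans Q Sigma d) : Sigma := t.1.1.2.
Definition tvec Q Sigma d (t : trans Q Sigma d) : vec d := t.1.2.
Definition ttgt Q Sigma d (t : trans Q Sigma d) : Q := t.2.

Section SPBA.
Variables (Q Sigma : finType) (d : nat).
Variables (q0 : Q) (Delta : seq (trans Q Sigma d)) (F : {set Q}) (C : vec d -> Prop).

(* A run r = r_1 r_2 ...; here [r i] stands for r_{i+1}. *)
Definition is_run (alpha : nat -> Sigma) (r : nat -> trans Q Sigma d) : Prop :=
  tsrc (r 0) = q0 /\
  (forall i, r i \in Delta) /\
  (forall i, tlab (r i) = alpha i) /\
  (forall i, ttgt (r i) = tsrc (r i.+1)).

Definition rstate (r : nat -> trans Q Sigma d) (k : nat) : Q :=
  if k is k'.+1 then ttgt (r k') else q0.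

(* rho(r_{a+1} ... r_b) *)
Definition rho (r : nat -> trans Q Sigma d) (a b : nat) : vec d :=
  [ffun k => \sum_(a <= i < b) tvec (r i) k].

(* k_0 = 0, k_1 < k_2 < ... all positions k >= 1 with p_k in F;
   accepting iff infinitely many such positions and every segment
   between consecutive ones has rho in C. *)
Definition accepting (r : nat -> trans Q Sigma d) : Prop :=
  (forall n, exists k, n < k /\ rstate r k \in F) /\
  (forall a b, a < b -> (a = 0 \/ rstate r a \in F) -> rstate r b \in F ->
     (forall k, a < k < b -> rstate r k \notin F) ->
     C (rho r a b)).

Definition S_omega (alpha : nat -> Sigma) : Prop :=
  exists r, is_run alpha r /\ accepting r.

Definition edge : rel Q :=
  fun p q => has (fun t => (tsrc t == p) && (ttgt t == q)) Delta.

Definition scc (u : Q) : {set Q} :=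
  [set v | connect edge u v && connect edge v u].

Definition leaf_scc (U : {set Q}) : Prop :=
  forall u v, u \in U -> edge u v -> scc v = U.

End SPBA.

From mathcomp Require Import all_boot.

(* Since the SCC of an accepting state is a leaf of the condensation, a run
   never leaves it once it has entered it; as that SCC holds no other
   accepting state, all accepting states visited by a run coincide with a
   single f, so F and {f} single out the same positions of the run and hence
   the same acceptance condition. *)

Set Implicit Arguments.
Unset Strict Implicit.
Unset Printing Implicit Defensive.

Section Condensation.
Variables (Q Sigma : finType) (d : nat) (Delta : seq (trans Q Sigma d)).

Lemma scc_refl u : u \in scc Delta u.
Proof. by rewrite inE connect0. Qed.

Lemma eq_scc u v : v \in scc Delta u -> scc Delta v = scc Delta u.
Proof.
rewrite inE => /andP[uv vu]; apply/setP => w; rewrite !inE.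
apply/andP/andP => [[vw wv]|[uw wu]]; split.
- exact: connect_trans uv vw.
- exact: connect_trans wv vu.
- exact: connect_trans vu uw.
- exact: connect_trans wu uv.
Qed.

Lemma leaf_scc_connect u v :
  leaf_scc Delta (scc Delta u) -> connect (edge Delta) u v -> v \in scc Delta u.
Proof.
move=> leaf /connectP[p]; elim/last_ind: p v => [|p w IHp] v /=.
  by move=> _ ->; exact: scc_refl.
rewrite rcons_path last_rcons => /andP[pth e] ->.
by rewrite -(leaf _ _ (IHp _ pth erefl) e) scc_refl.
Qed.

End Condensation.

Section Runs.
Variables (Q Sigma : finType) (d : nat) (q0 : Q).
Variables (Delta : seq (trans Q Sigma d)) (alpha : nat -> Sigma).
Variable r : nat -> trans Q Sigma d.
Hypothesis run_r : is_run q0 Delta alpha r.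

Lemma run_edge j : edge Delta (rstate q0 r j) (rstate q0 r j.+1).
Proof.
have [r0 [rD [_ rnext]]] := run_r.
apply/hasP; exists (r j) => //; case: j => [|j] /=.
- by rewrite r0 !eqxx.
- by rewrite rnext !eqxx.
Qed.

Lemma run_connect j k :
  j <= k -> connect (edge Delta) (rstate q0 r j) (rstate q0 r k).
Proof.
move/subnKC <-; elim: (k - j) => [|m IHm]; first by rewrite addn0 connect0.
by rewrite addnS (connect_trans IHm) // connect1 // run_edge.
Qed.

Variable F : {set Q}.
Hypothesis leaf_F : forall f, f \in F -> leaf_scc Delta (scc Delta f).
Hypothesis scc_inj_F :
  forall f g, f \in F -> g \in F -> scc Delta f = scc Delta g -> f = g.

Lemma run_accepting_states_eq j k :
  rstate q0 r j \in F -> rstate q0 r k \in F -> rstate q0 r j = rstate q0 r k.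
Proof.
wlog le_jk : j k / j <= k.
  by move=> wlog_le; case/orP: (leq_total j k) => /wlog_le ordered jF kF;
    [|symmetry]; apply: ordered.
move=> jF kF; apply: scc_inj_F => //; symmetry; apply: eq_scc.
exact: leaf_scc_connect (leaf_F jF) (run_connect le_jk).
Qed.

Lemma run_mem_F_set1 f k :
  f \in F -> rstate q0 r k = f ->
  forall j, (rstate q0 r j \in F) = (rstate q0 r j \in [set f]).
Proof.
move=> fF kf j; rewrite inE; apply/idP/eqP => [jF|-> //].
by rewrite -kf; apply: run_accepting_states_eq; rewrite ?kf.
Qed.

End Runs.

Lemma eq_accepting (Q Sigma : finType) (d : nat) (q0 : Q) (F G : {set Q})
    (C : vec d -> Prop) (r : nat -> trans Q Sigma d) :
  (forall j, (rstate q0 r j \in F) = (rstate q0 r j \in G)) ->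
  accepting q0 F C r <-> accepting q0 G C r.
Proof.
suff imp (F' G' : {set Q}) :
    (forall j, (rstate q0 r j \in F') = (rstate q0 r j \in G')) ->
    accepting q0 F' C r -> accepting q0 G' C r.
  by move=> FG; split; apply: imp => // j; rewrite FG.
move=> FG [inf seg]; split=> [n | a b ab aG bG out].
- by have [k [nk kF]] := inf n; exists k; rewrite -FG.
- by apply: seg; rewrite ?FG // => k /out; rewrite FG.
Qed.

Theorem corollary3 (Q Sigma : finType) (d : nat) (q0 : Q)
  (Delta : seq (trans Q Sigma d)) (F : {set Q}) (C : vec d -> Prop) :
  semilinear C ->
  (forall f, f \in F -> leaf_scc Delta (scc Delta f)) ->
  (forall f g, f \in F -> g \in F -> scc Delta f = scc Delta g -> f = g) ->
  forall alpha : nat -> Sigma,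
    S_omega q0 Delta F C alpha <->
    exists2 f, f \in F & S_omega q0 Delta [set f] C alpha.
Proof.
move=> _ leaf_F scc_inj_F alpha.
split=> [[r [run_r acc]] | [f fF [r [run_r acc]]]].
- have [k [_ kF]] := acc.1 0.
  exists (rstate q0 r k) => //; exists r; split => //.
  exact/(eq_accepting C (run_mem_F_set1 run_r leaf_F scc_inj_F kF erefl)).
- have [k [_]] := acc.1 0; rewrite inE => /eqP kf.
  exists r; split => //.
  exact/(eq_accepting C (run_mem_F_set1 run_r leaf_F scc_inj_F fF kf)).
Qed.
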